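(* Let $a\in\mathbb{C}$, $|a|<1$. Then \[ \sum_{k=1}^{\infty}k\zeta(2k+1)a^{2k-2}=\frac12\sum_{n=1}^{\infty}\frac{(-1)^{n-1}p(n)}{n\binom{2n}{n}^5(n^2-a^2)^2(n^2-a^2/4)^2}\prod_{m=1}^{n-1}\frac{1-4a^2/m^2}{(1-a^2/(m+n)^2)^2}, \] where $p(n)=2(2n-1)(3n-1)(4n^2-a^2)^2+(n^2-a^2)^2(13n^2-2a^2)$.
   Context: $\zeta$ is the Riemann zeta function. *)

From Stdlib Require Import Reals.
From Coquelicot Require Import Coquelicot.
Open Scope R_scope.

(* Riemann zeta function on real arguments s > 1: zeta s = sum_{n>=1} n^{-s}.
   (Only used at s = 2k+1 >= 3, where the series converges.) *)
Definition zeta (s : R) : R := Series (fun n : nat => / Rpower (INR (S n)) s).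

Fixpoint Cpow (z : C) (n : nat) : C :=
  match n with O => RtoC 1 | S k => Cmult z (Cpow z k) end.

Fixpoint Cprod1 (f : nat -> C) (N : nat) : C :=
  match N with O => RtoC 1 | S k => Cmult (Cprod1 f k) (f (S k)) end.

Definition cbinom (n : nat) : R := Binomial.C (2 * n) n.

Definition pcor6 (a : C) (n : nat) : C :=
  let x := RtoC (INR n) in
  Cplus (Cmult (RtoC 2) (Cmult (Cminus (Cmult 2 x) 1) (Cmult (Cminus (Cmult 3 x) 1)
          (Cpow (Cminus (Cmult 4 (Cpow x 2)) (Cpow a 2)) 2))))
        (Cmult (Cpow (Cminus (Cpow x 2) (Cpow a 2)) 2)
               (Cminus (Cmult 13 (Cpow x 2)) (Cmult 2 (Cpow a 2)))).

Definition lhs_term (a : C) (k : nat) : C :=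
  Cmult (RtoC (INR k * zeta (INR (2 * k + 1)))) (Cpow a (2 * k - 2)).

Definition rhs_term (a : C) (n : nat) : C :=
  let x := RtoC (INR n) in
  Cmult (RtoC (1/2))
   (Cmult
    (Cdiv (Cmult (RtoC ((-1) ^ (n - 1))) (pcor6 a n))
          (Cmult (RtoC (INR n * (cbinom n) ^ 5))
            (Cmult (Cpow (Cminus (Cpow x 2) (Cpow a 2)) 2)
                   (Cpow (Cminus (Cpow x 2) (Cdiv (Cpow a 2) 4)) 2))))
    (Cprod1 (fun m => let y := RtoC (INR m) in
               Cdiv (Cminus 1 (Cdiv (Cmult 4 (Cpow a 2)) (Cpow y 2)))
                    (Cpow (Cminus 1 (Cdiv (Cpow a 2) (Cpow (RtoC (INR (m + n))) 2))) 2))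
            (n - 1))).

(* The right-hand side comes from a Wilf-Zeilberger pair: the functions [wzF] and
   [wzG] below satisfy [wzF (n+1) k - wzF n k = wzG n (k+1) - wzG n k], and the n-th
   right-hand term equals [wzF n n + wzG (n-1) n].  Summing the WZ relation over
   k > n, where [wzG n k -> 0], shows that the tails S_n = sum_{k>n} wzF n k satisfy
   S_{n-1} - S_n = (n-th right-hand term).  Since |wzF (n+1) k| <= 3/4 |wzF n k|,
   S_n -> 0, so the right-hand series sums to S_0 = sum_k k/(k^2-a^2)^2.  Expanding
   k/(k^2-a^2)^2 = sum_j (j+1) a^(2j) / k^(2j+3) and exchanging the absolutely convergent
   double sum turns S_0 into the left-hand series. *)

From Pilot Require Import Defs.
From Stdlib Require Import Reals Lra Lia Factorial ClassicalEpsilon.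
From Coquelicot Require Import Coquelicot.
Open Scope R_scope.

Local Notation natC n := (RtoC (INR n)).

Lemma RtoC_neq_0 (x : R) : x <> 0 -> RtoC x <> 0%C.
Proof. intros Hx E. apply Hx. now injection E. Qed.

Ltac RtoC_neq_0_by tac :=
  repeat (rewrite <- RtoC_plus || rewrite <- RtoC_mult || rewrite <- RtoC_minus);
  apply RtoC_neq_0; tac.

Ltac push_RtoC :=
  repeat (rewrite RtoC_plus || rewrite RtoC_mult || rewrite RtoC_minus || rewrite RtoC_pow).

Lemma natC_S n : natC (S n) = (natC n + 1)%C.
Proof. now rewrite S_INR, RtoC_plus. Qed.

Lemma natC_add m n : natC (m + n) = (natC m + natC n)%C.
Proof. now rewrite plus_INR, RtoC_plus. Qed.

Lemma natC_mul m n : natC (m * n) = (natC m * natC n)%C.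
Proof. now rewrite mult_INR, RtoC_mult. Qed.

Lemma natC_neq_0 n : (0 < n)%nat -> natC n <> 0%C.
Proof. intros Hn. apply RtoC_neq_0, not_0_INR. lia. Qed.

Lemma Cmod_natC n : Cmod (natC n) = INR n.
Proof. rewrite Cmod_R. apply Rabs_pos_eq, pos_INR. Qed.

Lemma INR_pow_ge_1 j p : (0 < j)%nat -> 1 <= INR j ^ p.
Proof. intros Hj. apply pow_R1_Rle. apply (le_INR 1). lia. Qed.

Lemma Cmod_RtoC_nonneg (x : R) : 0 <= x -> Cmod (RtoC x) = x.
Proof. intros Hx. rewrite Cmod_R. now apply Rabs_pos_eq. Qed.

(** * Finite products and complex series *)

Section ProductsC.
Local Open Scope C_scope.

Lemma Cprod1_ext (f g : nat -> C) n :
  (forall m, (1 <= m <= n)%nat -> f m = g m) -> Cprod1 f n = Cprod1 g n.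
Proof.
  induction n as [|n IH]; intros E; simpl; [easy|].
  rewrite IH, E; [easy|lia|intros; apply E; lia].
Qed.

Lemma Cprod1_mult (f g : nat -> C) n :
  Cprod1 (fun m => f m * g m) n = Cprod1 f n * Cprod1 g n.
Proof. induction n as [|n IH]; simpl; [ring|]. rewrite IH. ring. Qed.

Lemma Cprod1_pow (f : nat -> C) p n :
  Cprod1 (fun m => f m ^ p) n = Cprod1 f n ^ p.
Proof. induction n as [|n IH]; simpl; [now rewrite Cpow_1_l|]. now rewrite IH, Cpow_mult_l. Qed.

Lemma Cprod1_neq_0 (f : nat -> C) n :
  (forall m, (1 <= m <= n)%nat -> f m <> 0) -> Cprod1 f n <> 0.
Proof.
  induction n as [|n IH]; intros Hf; simpl; [exact C1_nz|].
  apply Cmult_neq_0; [apply IH; intros m Hm|]; apply Hf; lia.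
Qed.

Lemma Cprod1_div (f g : nat -> C) n :
  (forall m, (1 <= m <= n)%nat -> g m <> 0) ->
  Cprod1 (fun m => f m / g m) n = Cprod1 f n / Cprod1 g n.
Proof.
  induction n as [|n IH]; intros Hg; simpl; [field; exact C1_nz|].
  assert (Hn : Cprod1 g n <> 0) by (apply Cprod1_neq_0; intros; apply Hg; lia).
  assert (HSn : g (S n) <> 0) by (apply Hg; lia).
  rewrite IH by (intros; apply Hg; lia). field. auto.
Qed.

Lemma Cprod1_natC_shift s n :
  Cprod1 (fun m => natC (s + m)) n = natC (fact (s + n)) / natC (fact s).
Proof.
  assert (Hs : natC (fact s) <> 0) by (apply natC_neq_0, lt_O_fact).
  induction n as [|n IH]; simpl Cprod1.
  - rewrite Nat.add_0_r. field. exact Hs.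
  - rewrite IH, Nat.add_succ_r, fact_simpl, natC_mul. field. exact Hs.
Qed.

End ProductsC.

Section SeriesC.
Local Open Scope C_scope.

Lemma is_series_C_ext (u v : nat -> C) (l : C) :
  (forall n, u n = v n) -> is_series u l -> is_series v l.
Proof. exact (@is_series_ext _ C_NormedModule u v l). Qed.

Lemma Cmod_series_le (u : nat -> C) (b : nat -> R) (l : C) (lb : R) :
  (forall k, (Cmod (u k) <= b k)%R) -> is_series u l -> is_series b lb -> (Cmod l <= lb)%R.
Proof.
  intros Hub Hu Hb.
  change (Rbar_le (Cmod l) lb).
  apply (is_lim_seq_le (fun n => Cmod (sum_n u n)) (sum_n b)); [| |exact Hb].
  - intros n. eapply Rle_trans; [apply (norm_sum_n_m (V := C_NormedModule))|].
    apply sum_n_m_le. exact Hub.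
  - exact (filterlim_comp _ _ _ _ _ _ _ _ Hu (filterlim_norm (V := C_NormedModule) l)).
Qed.

Lemma filterlim_C_of_Cmod_le (u : nat -> C) (l : C) (e : nat -> R) :
  (forall n, (Cmod (u n - l) <= e n)%R) -> is_lim_seq e 0 ->
  filterlim u eventually (locally l).
Proof.
  intros Hue He. apply filterlim_locally. intros eps.
  destruct (proj2 (is_lim_seq_spec e 0) He eps) as [N HN].
  exists N. intros n Hn. apply (norm_compat1 (V := C_NormedModule)).
  eapply Rle_lt_trans; [apply Hue|].
  specialize (HN n Hn). rewrite Rminus_0_r in HN.
  eapply Rle_lt_trans; [apply Rle_abs|exact HN].
Qed.

Lemma sum_n_telescope (u : nat -> C) n :
  sum_n (fun k => u (S k) - u k) n = u (S n) - u O.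
Proof.
  induction n as [|n IH]; [now rewrite sum_O|].
  rewrite sum_Sn, IH. change (u (S n) - u O + (u (S (S n)) - u (S n)) = u (S (S n)) - u O).
  ring.
Qed.

Lemma is_series_telescope (u : nat -> C) :
  filterlim u eventually (locally (0 : C)) -> is_series (fun k => u (S k) - u k) (- u O).
Proof.
  intros Hu. unfold is_series.
  apply (filterlim_ext (fun n => plus (u (S n)) (opp (u O)))).
  { intros n. rewrite sum_n_telescope. reflexivity. }
  replace (- u O) with (plus (zero : C) (opp (u O))).
  2:{ change (0 + - u O = - u O). ring. }
  apply (filterlim_comp_2 (G := locally (0 : C)) (H := locally (opp (u O))) _ _
           (@plus C_AbelianMonoid)).
  - exact (filterlim_comp _ _ _ _ _ _ _ _ (eventually_subseq S (fun n => Nat.lt_succ_diag_r _)) Hu).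
  - apply filterlim_const.
  - apply (filterlim_plus (V := C_NormedModule)).
Qed.

Lemma is_series_sum_n (u : nat -> nat -> C) (l : nat -> C) K :
  (forall k, is_series (u k) (l k)) ->
  is_series (fun j => sum_n (fun k => u k j) K) (sum_n l K).
Proof.
  intros Hu. induction K as [|K IH].
  - rewrite sum_O. apply (is_series_C_ext (u O)); [|apply Hu]. intros j. now rewrite sum_O.
  - rewrite sum_Sn. apply (is_series_C_ext (fun j => sum_n (fun k => u k j) K + u (S K) j)).
    { intros j. now rewrite sum_Sn. }
    exact (@is_series_plus _ C_NormedModule _ _ _ _ IH (Hu (S K))).
Qed.

Lemma is_series_RtoC (u : nat -> R) (l : R) :
  is_series u l -> is_series (fun k => RtoC (u k)) (RtoC l).
Proof.
  intros Hu. apply (filterlim_C_of_Cmod_le _ _ (fun n => Rabs (sum_n u n - l))).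
  - intros n. apply Req_le. rewrite <- Cmod_R, RtoC_minus. f_equal. f_equal.
    induction n as [|n IH]; [now rewrite !sum_O|].
    rewrite !sum_Sn, IH. symmetry. apply RtoC_plus.
  - apply (is_lim_seq_abs_0 (fun n => sum_n u n - l)%R).
    replace (Finite 0) with (Finite (l - l)) by (f_equal; ring).
    apply is_lim_seq_minus'; [exact Hu|apply is_lim_seq_const].
Qed.

End SeriesC.

Section ArithmeticGeometric.
Local Open Scope C_scope.

Lemma sum_n_arith_geom (X : C) K :
  sum_n (fun k => natC (S k) * X ^ k) K * (1 - X) ^ 2
  = 1 - natC (K + 2) * X ^ (K + 1) + natC (K + 1) * X ^ (K + 2).
Proof.
  induction K as [|K IH].
  - rewrite sum_O. simpl. push_RtoC. ring.
  - rewrite sum_Sn. change (plus ?x ?y) with (x + y).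
    rewrite Cmult_plus_distr_r, IH.
    replace (S K + 2)%nat with (S (S (S K))) by lia. replace (S K + 1)%nat with (S (S K)) by lia.
    replace (K + 2)%nat with (S (S K)) by lia. replace (K + 1)%nat with (S K) by lia.
    rewrite !natC_S. simpl. ring.
Qed.

Lemma Cmod_arith_geom_remainder_le (X : C) (q : R) K : (Cmod X <= q < 1)%R ->
  Cmod (/ (1 - X) ^ 2 - sum_n (fun k => natC (S k) * X ^ k) K)
  <= ((2 * INR K + 3) * q ^ K / (1 - q) ^ 2)%R.
Proof.
  intros Hq. pose proof (Cmod_ge_0 X).
  assert (H1X : (1 - q <= Cmod (1 - X))%R).
  { pose proof (Cmod_triangle (1 - X) X) as T.
    replace (1 - X + X) with (RtoC 1) in T by ring. rewrite Cmod_1 in T. lra. }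
  assert (HX : 1 - X <> 0) by (intros E; rewrite E, Cmod_0 in H1X; lra).
  replace (/ (1 - X) ^ 2 - sum_n (fun k => natC (S k) * X ^ k) K)
    with ((natC (K + 2) * X ^ (K + 1) - natC (K + 1) * X ^ (K + 2)) / (1 - X) ^ 2).
  2:{ rewrite <- (Cmult_1_r (sum_n _ K)), <- (Cinv_r ((1 - X) ^ 2)) by (apply Cpow_nz; exact HX).
      rewrite Cmult_assoc, sum_n_arith_geom. field. exact HX. }
  rewrite Cmod_div by (apply Cpow_nz; exact HX). rewrite Cmod_pow.
  assert (Hp : forall p, (Cmod X ^ (K + p) <= q ^ K)%R).
  { intros p. rewrite pow_add. rewrite <- (Rmult_1_r (q ^ K)).
    apply Rmult_le_compat; [apply pow_le; lra|apply pow_le; lra|apply pow_incr; lra|].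
    rewrite <- (pow1 p). apply pow_incr. lra. }
  apply Rmult_le_compat; [apply Cmod_ge_0|apply Rlt_le, Rinv_0_lt_compat, pow_lt; lra| |].
  - unfold Cminus. eapply Rle_trans; [apply Cmod_triangle|].
    rewrite Cmod_opp, !Cmod_mult, !Cmod_natC, !Cmod_pow, !plus_INR. simpl (INR 1); simpl (INR 2).
    pose proof (Hp 1%nat). pose proof (Hp 2%nat). pose proof (pos_INR K). nra.
  - apply Rinv_le_contravar; [apply pow_lt; lra|]. apply pow_incr. lra.
Qed.

End ArithmeticGeometric.

(** * Real sequences and zeta values *)

Lemma is_lim_seq_inv_INR_add N : is_lim_seq (fun n => / INR (n + N)) 0.
Proof.
  apply (is_lim_seq_incr_n (fun n => / INR n) N 0).
  apply (is_lim_seq_inv _ p_infty); [apply is_lim_seq_INR|discriminate].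
Qed.

Lemma is_lim_seq_scal_0 (c : R) (u : nat -> R) :
  is_lim_seq u 0 -> is_lim_seq (fun n => c * u n) 0.
Proof.
  intros Hu. replace (Finite 0) with (Rbar_mult c 0) by (simpl; f_equal; ring).
  now apply is_lim_seq_scal_l.
Qed.

Definition inv_pair (k : nat) : R := / (INR (S k) * INR (S (S k))).

Lemma sum_n_inv_pair n : sum_n inv_pair n = 1 - / INR (S (S n)).
Proof.
  induction n as [|n IH].
  - rewrite sum_O. unfold inv_pair. simpl. field.
  - rewrite sum_Sn, IH. change (1 - / INR (S (S n)) + inv_pair (S n) = 1 - / INR (S (S (S n)))).
    unfold inv_pair. rewrite !(S_INR (S _)). pose proof (pos_INR (S n)). field. lra.
Qed.

Lemma is_series_inv_pair : is_series inv_pair 1.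
Proof.
  change (is_lim_seq (sum_n inv_pair) 1).
  apply (is_lim_seq_ext (fun n => 1 - / INR (n + 2))).
  { intros n. rewrite sum_n_inv_pair. do 3 f_equal. lia. }
  replace (Finite 1) with (Finite (1 - 0)) by (f_equal; ring).
  apply is_lim_seq_minus'; [apply is_lim_seq_const|apply is_lim_seq_inv_INR_add].
Qed.

Lemma inv_pow_le_inv_pair j m : (2 <= m)%nat -> / INR (S j) ^ m <= 2 * inv_pair j.
Proof.
  intros Hm. unfold inv_pair. rewrite (S_INR (S j)).
  set (x := INR (S j)). assert (Hx : 1 <= x) by (apply (le_INR 1); lia).
  apply (Rle_trans _ (/ x ^ 2)).
  - apply Rinv_le_contravar; [apply pow_lt; lra|]. now apply Rle_pow.
  - replace (2 * / (x * (x + 1))) with (/ (x * (x + 1) / 2)) by (field; lra).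
    apply Rinv_le_contravar; nra.
Qed.

Lemma is_lim_seq_INR_mult_pow (q : R) :
  0 <= q < 1 -> is_lim_seq (fun n => INR n * q ^ n) 0.
Proof.
  intros Hq. set (s := (1 + q) / 2). set (h := / s - 1).
  assert (Hs : 0 < s < 1) by (unfold s; lra).
  assert (Hh : 0 < h).
  { unfold h. assert (1 < / s) by (rewrite <- Rinv_1; apply Rinv_lt_contravar; lra). lra. }
  (* q <= s^2, and Bernoulli's inequality (1 + n h) s^n <= ((1 + h) s)^n = 1 bounds n s^n *)
  assert (Hns : forall n, INR n * s ^ n <= / h).
  { intros n. pose proof (Rle_pow_lin h n (Rlt_le _ _ Hh)) as B.
    replace (1 + h) with (/ s) in B by (unfold h; ring).
    rewrite pow_inv in B. assert (0 < s ^ n) by (apply pow_lt; lra).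
    apply (Rmult_le_reg_l h); [lra|]. rewrite Rinv_r by lra.
    apply (Rmult_le_compat_r (s ^ n)) in B; [|lra]. rewrite Rinv_l in B by lra. nra. }
  apply (is_lim_seq_le_le (fun _ => 0) _ (fun n => / h * s ^ n)).
  - intros n. pose proof (pos_INR n). assert (0 <= s ^ n) by (apply pow_le; lra).
    assert (Hqs : q ^ n <= s ^ n * s ^ n).
    { rewrite <- Rpow_mult_distr. apply pow_incr. unfold s. nra. }
    split; [apply Rmult_le_pos; [lra|apply pow_le; lra]|].
    apply (Rle_trans _ (INR n * s ^ n * s ^ n));
      [rewrite Rmult_assoc; now apply Rmult_le_compat_l|].
    apply Rmult_le_compat_r; [lra|apply Hns].
  - apply is_lim_seq_const.
  - apply is_lim_seq_scal_0, is_lim_seq_geom. rewrite Rabs_pos_eq; lra.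
Qed.

Lemma is_series_zeta m : (2 <= m)%nat -> is_series (fun j => / INR (S j) ^ m) (zeta (INR m)).
Proof.
  intros Hm. unfold zeta.
  rewrite (Series_ext _ (fun j => / INR (S j) ^ m))
    by (intros j; rewrite Rpower_pow; [easy|apply lt_0_INR; lia]).
  apply Series_correct, (ex_series_le (V := R_CompleteNormedModule) _ (fun j => 2 * inv_pair j)).
  - intros j. change (Rabs (/ INR (S j) ^ m) <= 2 * inv_pair j).
    rewrite Rabs_pos_eq by (apply Rlt_le, Rinv_0_lt_compat, pow_lt, lt_0_INR; lia).
    now apply inv_pow_le_inv_pair.
  - eexists. exact (is_series_scal_l 2 _ _ is_series_inv_pair).
Qed.

Lemma lhs_term_expansion (a : C) k :
  is_series (fun j => / natC (S j) ^ 3 * (natC (S k) * (a ^ 2 / natC (S j) ^ 2) ^ k))%C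
    (lhs_term a (S k)).
Proof.
  unfold lhs_term. change Defs.Cpow with Complex.Cpow.
  replace (2 * S k - 2)%nat with (2 * k)%nat by lia.
  replace (INR (2 * S k + 1)) with (INR (2 * k + 3)) by (f_equal; lia).
  set (c := (natC (S k) * a ^ (2 * k))%C).
  assert (H : is_series (fun j => c * RtoC (/ INR (S j) ^ (2 * k + 3)))%C
                        (c * RtoC (zeta (INR (2 * k + 3))))%C).
  { exact (@is_series_scal _ C_NormedModule c _ _
             (is_series_RtoC _ _ (is_series_zeta (2 * k + 3) ltac:(lia)))). }
  replace (RtoC (INR (S k) * zeta (INR (2 * k + 3))) * a ^ (2 * k))%C
    with (c * RtoC (zeta (INR (2 * k + 3))))%C by (unfold c; rewrite RtoC_mult; ring).
  revert H. apply is_series_C_ext. intros j. unfold c.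
  assert (Hy : natC (S j) <> 0%C) by (apply natC_neq_0; lia).
  rewrite RtoC_inv, RtoC_pow by (apply pow_nonzero, not_0_INR; lia).
  unfold Cdiv. rewrite Cpow_mult_l, Cpow_inv, Cpow_add_r, !Cpow_mult_r by (apply Cpow_nz, Hy).
  field. split; [apply Cpow_nz, Cpow_nz|]; exact Hy.
Qed.

(** * The Wilf-Zeilberger pair *)

Section WZPair.
Local Open Scope C_scope.
Variable a : C.

Definition sqdiff (j : nat) : C := natC j ^ 2 - a ^ 2.

Hypothesis sqdiff_neq_0 : forall j, (0 < j)%nat -> sqdiff j <> 0.

Definition numer_factor (m : nat) : C := natC m ^ 2 * (natC m ^ 2 - 4 * a ^ 2).
Definition numer (n : nat) : C := Cprod1 numer_factor n.
Definition denom (n k : nat) : C := sqdiff k ^ 2 * Cprod1 (fun i => sqdiff (k + i) ^ 2) n.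
Definition kernel (n k : nat) : C := numer n / denom n k.
Definition wz_coef (n : nat) : C := RtoC (INR (fact n) ^ 2 / (2 * INR (fact (2 * n)))).
Definition sgn (n : nat) : C := RtoC ((-1) ^ n).
Definition wz_cert (n k : nat) : C :=
  natC k ^ 2 + (3 * natC n + 1) * natC k + (5 * natC n ^ 2 + 4 * natC n + 1) / 2 - a ^ 2.

Definition wzF (n k : nat) : C := sgn n * wz_coef n * (2 * natC k + natC n) * kernel n k.
Definition wzG (n k : nat) : C := sgn n * wz_coef n / (2 * natC n + 1) * wz_cert n k * kernel n k.

Lemma sqdiff_sq_neq_0 j : (0 < j)%nat -> sqdiff j ^ 2 <> 0.
Proof. intros Hj. now apply Cpow_nz, sqdiff_neq_0. Qed.

Lemma denom_neq_0 n k : (0 < k)%nat -> denom n k <> 0.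
Proof.
  intros Hk. apply Cmult_neq_0; [now apply sqdiff_sq_neq_0|].
  apply Cprod1_neq_0. intros; apply sqdiff_sq_neq_0; lia.
Qed.

Lemma sgn_S n : sgn (S n) = - sgn n.
Proof. unfold sgn. rewrite <- RtoC_opp. f_equal. simpl. ring. Qed.

Lemma wz_coef_S n : wz_coef (S n) = wz_coef n * (natC n + 1) / (2 * (2 * natC n + 1)).
Proof.
  pose proof (pos_INR n). pose proof (INR_fact_lt_0 n). pose proof (INR_fact_lt_0 (2 * n)).
  unfold wz_coef. replace (2 * S n)%nat with (S (S (2 * n))) by lia.
  rewrite !fact_simpl, !mult_INR, !S_INR, mult_INR. simpl (INR 2).
  rewrite !RtoC_div by nra. push_RtoC.
  field. repeat split; RtoC_neq_0_by nra.
Qed.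

Lemma denom_S n k : denom (S n) k = denom n k * sqdiff (k + S n) ^ 2.
Proof. unfold denom. simpl Cprod1. ring. Qed.

Lemma denom_shift n k : denom n (S k) * sqdiff k ^ 2 = denom n k * sqdiff (k + S n) ^ 2.
Proof.
  induction n as [|n IH].
  - unfold denom. simpl Cprod1. rewrite Nat.add_1_r. ring.
  - rewrite !denom_S, <- IH. replace (S k + S n)%nat with (k + S (S n))%nat by lia. ring.
Qed.

Lemma kernel_S n k : (0 < k)%nat ->
  kernel (S n) k = kernel n k * numer_factor (S n) / sqdiff (k + S n) ^ 2.
Proof.
  intros Hk. unfold kernel. rewrite denom_S. unfold numer. simpl Cprod1. fold (numer n).
  field. split; (apply denom_neq_0 + apply sqdiff_neq_0); lia.
Qed.

Lemma kernel_shift n k : (0 < k)%nat ->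
  kernel n (S k) = kernel n k * sqdiff k ^ 2 / sqdiff (k + S n) ^ 2.
Proof.
  intros Hk. unfold kernel.
  assert (E : denom n (S k) = denom n k * sqdiff (k + S n) ^ 2 / sqdiff k ^ 2).
  { rewrite <- denom_shift. field. now apply sqdiff_neq_0. }
  rewrite E. field. repeat split; (apply denom_neq_0 + apply sqdiff_neq_0); lia.
Qed.

Lemma wzF_0 k : (0 < k)%nat -> wzF 0 k = natC k / sqdiff k ^ 2.
Proof.
  intros Hk. unfold wzF, kernel, numer, denom. simpl Cprod1.
  replace (wz_coef 0) with (RtoC (/ 2)) by (unfold wz_coef; f_equal; simpl; field).
  change (sgn 0) with (RtoC 1). change (natC 0) with (RtoC 0). rewrite RtoC_inv by lra.
  field. now apply sqdiff_neq_0.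
Qed.

Lemma wz_pair n k : (0 < k)%nat -> wzF (S n) k - wzF n k = wzG n (S k) - wzG n k.
Proof.
  intros Hk. pose proof (sqdiff_neq_0 (k + S n) ltac:(lia)) as Hq.
  pose proof (pos_INR n) as Hn.
  unfold wzF, wzG, wz_cert.
  rewrite kernel_S, kernel_shift, sgn_S, wz_coef_S by exact Hk.
  unfold numer_factor, sqdiff in *. rewrite natC_add, !natC_S in *.
  field. split; [RtoC_neq_0_by lra|exact Hq].
Qed.

Definition wz_ratio (n k : nat) : C :=
  - (natC n + 1) * (2 * natC k + natC n + 1) * numer_factor (S n)
  / (2 * (2 * natC n + 1) * (2 * natC k + natC n) * sqdiff (k + S n) ^ 2).

Lemma wzF_S n k : (0 < k)%nat -> wzF (S n) k = wzF n k * wz_ratio n k.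
Proof.
  intros Hk. pose proof (pos_INR n). pose proof (lt_0_INR k Hk).
  unfold wzF, wz_ratio. rewrite kernel_S, sgn_S, wz_coef_S, natC_S by exact Hk.
  field. repeat split; first [apply sqdiff_neq_0; lia|RtoC_neq_0_by lra].
Qed.

Lemma wzG_eq n k : (0 < k)%nat ->
  wzG n k = wzF n k * wz_cert n k / ((2 * natC n + 1) * (2 * natC k + natC n)).
Proof.
  intros Hk. pose proof (pos_INR n). pose proof (lt_0_INR k Hk).
  unfold wzF, wzG. field. split; RtoC_neq_0_by lra.
Qed.

Lemma rhs_product n :
  Cprod1 (fun m => (1 - 4 * a ^ 2 / natC m ^ 2) / (1 - a ^ 2 / natC (m + S n) ^ 2) ^ 2) n
  = numer n * (natC (fact (S n + n)) / natC (fact (S n))) ^ 4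
    / (natC (fact n) ^ 4 * Cprod1 (fun m => sqdiff (S n + m) ^ 2) n).
Proof.
  rewrite (Cprod1_ext _
    (fun m => numer_factor m * natC (S n + m) ^ 4 / (natC m ^ 4 * sqdiff (S n + m) ^ 2))).
  - rewrite Cprod1_div, !Cprod1_mult, !Cprod1_pow, Cprod1_natC_shift.
    + change (Cprod1 (fun m => natC m) n) with (Cprod1 (fun m => natC (0 + m)) n).
      rewrite Cprod1_natC_shift. unfold numer. change (natC (fact 0)) with (RtoC 1).
      change (0 + n)%nat with n. field.
      repeat split;
        first [apply natC_neq_0, lt_O_fact|apply Cprod1_neq_0; intros; apply sqdiff_neq_0; lia].
    + intros m Hm. apply Cmult_neq_0; [apply Cpow_nz, natC_neq_0; lia|apply sqdiff_sq_neq_0; lia].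
  - intros m Hm. rewrite Nat.add_comm. pose proof (sqdiff_neq_0 (S n + m) ltac:(lia)).
    pose proof (natC_neq_0 m ltac:(lia)). pose proof (natC_neq_0 (S n + m) ltac:(lia)).
    unfold numer_factor, sqdiff in *. field. tauto.
Qed.

Lemma rhs_term_diag n : rhs_term a (S n) = wzF (S n) (S n) + wzG n (S n).
Proof.
  unfold rhs_term, pcor6. change Defs.Cpow with Complex.Cpow.
  replace (S n - 1)%nat with n by lia. rewrite rhs_product.
  unfold wzF, wzG, kernel, cbinom, Binomial.C.
  change (numer (S n)) with (numer n * numer_factor (S n)).
  rewrite denom_S, sgn_S, wz_coef_S. fold (sgn n). unfold denom, wz_coef.
  replace (2 * S n - S n)%nat with (S n) by lia.
  replace (2 * S n)%nat with (S (S (2 * n))) by lia.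
  replace (S n + n)%nat with (S (2 * n)) by lia.
  replace (S n + S n)%nat with (S (S (2 * n))) by lia.
  set (P := Cprod1 (fun i => sqdiff (S n + i) ^ 2) n).
  assert (HP : P <> 0) by (apply Cprod1_neq_0; intros; apply sqdiff_sq_neq_0; lia).
  pose proof (sqdiff_neq_0 (S n) ltac:(lia)) as Hq1.
  pose proof (sqdiff_neq_0 (S (S (2 * n))) ltac:(lia)) as Hq2.
  pose proof (INR_fact_lt_0 n). pose proof (INR_fact_lt_0 (2 * n)). pose proof (pos_INR n).
  unfold wz_cert, numer_factor, sqdiff in Hq1, Hq2 |- *.
  rewrite !fact_simpl, !mult_INR, !S_INR, !mult_INR. change (INR 2) with 2.
  rewrite !RtoC_div by nra. push_RtoC. rewrite !RtoC_div by nra. push_RtoC.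
  replace (natC (S n)) with (natC n + 1) in Hq1 by (now rewrite natC_S).
  replace (natC (S (S (2 * n)))) with (2 * natC n + 1 + 1) in Hq2
    by (rewrite !natC_S, mult_INR; now push_RtoC).
  assert (Hq3 : (natC n + 1) ^ 2 - a ^ 2 / 4 <> 0).
  { intros E. apply Hq2. transitivity (4 * ((natC n + 1) ^ 2 - a ^ 2 / 4)); [field|].
    rewrite E. ring. }
  field. repeat split; cbv beta; first [assumption|RtoC_neq_0_by nra].
Qed.

End WZPair.

(** * Estimates for |a| < 1 *)

Section SmallParameter.
Variable a : C.
Hypothesis ha : Cmod a < 1.

Local Notation r := (Cmod a ^ 2).

Lemma r_bounds : 0 <= r < 1.
Proof. pose proof (Cmod_ge_0 a). split; nra. Qed.

Lemma Cmod_sqdiff_ge j : INR j ^ 2 - r <= Cmod (sqdiff a j).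
Proof.
  pose proof (Cmod_triangle (sqdiff a j) (a ^ 2)) as T. unfold sqdiff in *.
  replace (natC j ^ 2 - a ^ 2 + a ^ 2)%C with (natC j ^ 2)%C in T by ring.
  rewrite !Cmod_pow, Cmod_natC in T. lra.
Qed.

Lemma Cmod_sqdiff_sq_ge j : (0 < j)%nat -> (INR j ^ 2 - r) ^ 2 <= Cmod (sqdiff a j ^ 2).
Proof.
  intros Hj. pose proof r_bounds. pose proof (Cmod_sqdiff_ge j). pose proof (INR_pow_ge_1 j 2 Hj).
  rewrite Cmod_pow. apply pow_incr. split; lra.
Qed.

Lemma sqdiff_neq_0_small j : (0 < j)%nat -> sqdiff a j <> 0%C.
Proof.
  intros Hj E. pose proof (Cmod_sqdiff_ge j) as H. rewrite E, Cmod_0 in H.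
  pose proof r_bounds. pose proof (INR_pow_ge_1 j 2 Hj). lra.
Qed.

Lemma Cmod_wzF0_le k : (0 < k)%nat -> Cmod (wzF a 0 k) <= / ((1 - r) ^ 2 * INR k ^ 3).
Proof.
  intros Hk. pose proof r_bounds. pose proof (INR_pow_ge_1 k 2 Hk).
  assert (1 <= INR k) by (apply (le_INR 1); lia).
  rewrite (wzF_0 _ sqdiff_neq_0_small) by exact Hk.
  rewrite Cmod_div by (apply Cpow_nz, sqdiff_neq_0_small, Hk). rewrite Cmod_natC.
  replace (/ ((1 - r) ^ 2 * INR k ^ 3)) with (INR k / ((1 - r) * INR k ^ 2) ^ 2)
    by (field; repeat split; nra).
  apply Rmult_le_compat_l; [lra|]. apply Rinv_le_contravar; [apply pow_lt; nra|].
  eapply Rle_trans; [|now apply Cmod_sqdiff_sq_ge]. apply pow_incr. nra.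
Qed.

Lemma Cmod_numer_factor_le m : Cmod (numer_factor a m) <= INR m ^ 2 * (INR m ^ 2 + 4).
Proof.
  pose proof r_bounds. unfold numer_factor.
  rewrite Cmod_mult, Cmod_pow, Cmod_natC.
  apply Rmult_le_compat_l; [apply pow_le, pos_INR|].
  eapply Rle_trans; [apply Cmod_triangle|]. rewrite Cmod_opp, Cmod_mult, !Cmod_pow, Cmod_natC.
  rewrite Cmod_RtoC_nonneg by lra. lra.
Qed.

Lemma Cmod_wz_ratio_le n k : (0 < k)%nat -> Cmod (wz_ratio a n k) <= 3 / 4.
Proof.
  intros Hk. pose proof r_bounds. pose proof (pos_INR n) as Hn.
  assert (HK : 1 <= INR k) by (apply (le_INR 1); lia).
  pose proof (Cmod_numer_factor_le (S n)) as HN.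
  pose proof (Cmod_sqdiff_sq_ge (k + S n) ltac:(lia)) as HQ.
  rewrite S_INR in HN. rewrite plus_INR, S_INR in HQ.
  unfold wz_ratio.
  replace (- (natC n + 1) * (2 * natC k + natC n + 1))%C
    with (- RtoC ((INR n + 1) * (2 * INR k + INR n + 1)))%C by (push_RtoC; ring).
  replace (2 * (2 * natC n + 1) * (2 * natC k + natC n))%C
    with (RtoC (2 * (2 * INR n + 1) * (2 * INR k + INR n))) by (push_RtoC; ring).
  rewrite Cmod_div
    by (apply Cmult_neq_0; [apply RtoC_neq_0; nra|apply Cpow_nz, sqdiff_neq_0_small; lia]).
  rewrite !Cmod_mult, Cmod_opp, !Cmod_RtoC_nonneg by nra.
  assert (HQ' : ((INR n + 1) * (INR n + 3)) ^ 2 <= Cmod (sqdiff a (k + S n) ^ 2)).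
  { eapply Rle_trans; [|exact HQ]. apply pow_incr. nra. }
  set (N := Cmod (numer_factor a (S n))) in *. set (Q := Cmod (sqdiff a (k + S n) ^ 2)) in *.
  assert (HNQ : 0 < ((INR n + 1) * (INR n + 3)) ^ 2) by (apply pow_lt; nra).
  assert (HQ0 : 0 < Q) by lra.
  apply Rle_div_l; [apply Rmult_lt_0_compat; [nra|exact HQ0]|].
  assert (B1 : INR n + 1 <= 2 * INR n + 1) by lra.
  assert (B2 : 2 * INR k + INR n + 1 <= 3 / 2 * (2 * INR k + INR n)) by lra.
  assert (B3 : N <= Q).
  { eapply Rle_trans; [exact HN|]. eapply Rle_trans; [|exact HQ']. nra. }
  apply (Rle_trans _ ((2 * INR n + 1) * (3 / 2 * (2 * INR k + INR n)) * Q)); [|lra].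
  apply Rmult_le_compat; [nra|apply Cmod_ge_0| |exact B3].
  apply Rmult_le_compat; lra.
Qed.

Lemma Cmod_wzF_le n k : (0 < k)%nat -> Cmod (wzF a n k) <= (3 / 4) ^ n * Cmod (wzF a 0 k).
Proof.
  intros Hk. induction n as [|n IH]; [simpl; lra|].
  rewrite (wzF_S _ sqdiff_neq_0_small) by exact Hk. rewrite Cmod_mult.
  pose proof (Cmod_wz_ratio_le n k Hk). pose proof (Cmod_ge_0 (wzF a n k)).
  simpl pow. nra.
Qed.

Lemma Cmod_wzF_tail_le n j :
  Cmod (wzF a n (j + S n)) <= (3 / 4) ^ n * (2 / (1 - r) ^ 2) * inv_pair j.
Proof.
  pose proof r_bounds. assert (Hr : 0 < (1 - r) ^ 2) by (apply pow_lt; lra).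
  eapply Rle_trans; [apply Cmod_wzF_le; lia|]. rewrite Rmult_assoc.
  apply Rmult_le_compat_l; [apply pow_le; lra|].
  eapply Rle_trans; [apply Cmod_wzF0_le; lia|].
  replace (2 / (1 - r) ^ 2 * inv_pair j) with (/ (1 - r) ^ 2 * (2 * inv_pair j))
    by (unfold Rdiv; ring).
  rewrite Rinv_mult. apply Rmult_le_compat_l; [apply Rlt_le, Rinv_0_lt_compat, Hr|].
  eapply Rle_trans; [|apply (inv_pow_le_inv_pair j 3); lia].
  apply Rinv_le_contravar; [apply pow_lt, lt_0_INR; lia|].
  apply pow_incr. split; [apply pos_INR|apply le_INR; lia].
Qed.

Lemma wzF_tail_summable n : exists s : C,
  is_series (fun j => wzF a n (j + S n)) s /\ Cmod s <= (3 / 4) ^ n * (2 / (1 - r) ^ 2).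
Proof.
  set (c := (3 / 4) ^ n * (2 / (1 - r) ^ 2)).
  assert (Hb : is_series (fun j => c * inv_pair j) (c * 1))
    by exact (is_series_scal_l c _ _ is_series_inv_pair).
  destruct (ex_series_le (V := C_CompleteNormedModule) (fun j => wzF a n (j + S n))
              (fun j => c * inv_pair j)) as [s Hs].
  - intros j. apply Cmod_wzF_tail_le.
  - now exists (c * 1).
  - exists s. split; [exact Hs|]. rewrite <- (Rmult_1_r c).
    exact (Cmod_series_le _ _ _ _ (Cmod_wzF_tail_le n) Hs Hb).
Qed.

Definition tail_sum (n : nat) : C :=
  proj1_sig (constructive_indefinite_description _ (wzF_tail_summable n)).

Lemma tail_sum_spec n :
  is_series (fun j => wzF a n (j + S n)) (tail_sum n)
  /\ Cmod (tail_sum n) <= (3 / 4) ^ n * (2 / (1 - r) ^ 2).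
Proof. exact (proj2_sig (constructive_indefinite_description _ (wzF_tail_summable n))). Qed.

Lemma Cmod_wz_cert_le n m : (0 < m)%nat -> Cmod (wz_cert a n m) <= 4 * (INR n + 1) ^ 2 * INR m ^ 2.
Proof.
  intros Hm. pose proof r_bounds. pose proof (pos_INR n).
  assert (1 <= INR m) by (apply (le_INR 1); lia).
  unfold wz_cert.
  replace (natC m ^ 2 + (3 * natC n + 1) * natC m + (5 * natC n ^ 2 + 4 * natC n + 1) / 2)%C
    with (RtoC (INR m ^ 2 + (3 * INR n + 1) * INR m + (5 * INR n ^ 2 + 4 * INR n + 1) / 2))
    by (push_RtoC; rewrite RtoC_div by lra; push_RtoC; reflexivity).
  eapply Rle_trans; [apply Cmod_triangle|]. rewrite Cmod_opp, Cmod_pow, Cmod_RtoC_nonneg by nra.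
  assert (0 <= (3 * INR n + 1) * (INR m ^ 2 - INR m)) by (apply Rmult_le_pos; nra).
  assert (0 <= (5 * INR n ^ 2 + 4 * INR n + 1) * (INR m ^ 2 - 1)) by (apply Rmult_le_pos; nra).
  assert (0 <= (3 * INR n ^ 2 + 6 * INR n + 1) * INR m ^ 2) by (apply Rmult_le_pos; nra).
  nra.
Qed.

Lemma Cmod_wzG_le n m : (0 < m)%nat ->
  Cmod (wzG a n m) <= 4 * (INR n + 1) ^ 2 / (1 - r) ^ 2 * / INR m.
Proof.
  intros Hm. pose proof r_bounds. pose proof (pos_INR n).
  assert (1 <= INR m) by (apply (le_INR 1); lia).
  rewrite wzG_eq by exact Hm.
  replace ((2 * natC n + 1) * (2 * natC m + natC n))%C
    with (RtoC ((2 * INR n + 1) * (2 * INR m + INR n))) by (push_RtoC; reflexivity).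
  rewrite Cmod_div, Cmod_mult, Cmod_RtoC_nonneg by (try apply RtoC_neq_0; nra).
  pose proof (Cmod_wzF_le n m Hm) as HF. pose proof (Cmod_wzF0_le m Hm) as HF0.
  pose proof (Cmod_wz_cert_le n m Hm) as HC.
  pose proof (Cmod_ge_0 (wzF a n m)). pose proof (Cmod_ge_0 (wz_cert a n m)).
  assert (Hp : 0 <= (3 / 4) ^ n <= 1)
    by (split; [apply pow_le|rewrite <- (pow1 n); apply pow_incr]; lra).
  assert (Hr : 0 < (1 - r) ^ 2) by (apply pow_lt; lra).
  assert (HF1 : Cmod (wzF a n m) <= / ((1 - r) ^ 2 * INR m ^ 3)).
  { eapply Rle_trans; [exact HF|]. pose proof (Cmod_ge_0 (wzF a 0 m)). nra. }
  apply (Rle_trans _ (Cmod (wzF a n m) * Cmod (wz_cert a n m))).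
  { assert (HFC : 0 <= Cmod (wzF a n m) * Cmod (wz_cert a n m)) by nra.
    assert (HD : 1 <= (2 * INR n + 1) * (2 * INR m + INR n)) by nra.
    apply Rle_div_l; [lra|]. pose proof (Rmult_le_compat_l _ _ _ HFC HD). lra. }
  apply (Rle_trans _ (/ ((1 - r) ^ 2 * INR m ^ 3) * (4 * (INR n + 1) ^ 2 * INR m ^ 2))).
  { apply Rmult_le_compat; assumption. }
  right. field. nra.
Qed.

Lemma wzG_tail_lim n : filterlim (fun k => wzG a n (k + S n)) eventually (locally (0 : C)).
Proof.
  set (c := 4 * (INR n + 1) ^ 2 / (1 - r) ^ 2).
  apply (filterlim_C_of_Cmod_le _ _ (fun k => c * / INR (k + S n))).
  - intros k. replace (wzG a n (k + S n) - 0)%C with (wzG a n (k + S n)) by ring.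
    apply Cmod_wzG_le. lia.
  - apply is_lim_seq_scal_0, is_lim_seq_inv_INR_add.
Qed.

Lemma rhs_term_eq_tail_diff n : rhs_term a (S n) = (tail_sum n - tail_sum (S n))%C.
Proof.
  destruct (tail_sum_spec n) as [H0 _]. destruct (tail_sum_spec (S n)) as [H1 _].
  set (u := fun k => wzF a (S n) (k + S n)).
  assert (Hu : is_series u (tail_sum (S n) + u O)%C).
  { apply (is_series_decr_1 (V := C_NormedModule)).
    replace (plus _ _) with (tail_sum (S n))
      by (change (tail_sum (S n) = tail_sum (S n) + u O - u O)%C; ring).
    apply (is_series_C_ext (fun k => wzF a (S n) (k + S (S n)))); [|exact H1].
    intros k. unfold u. f_equal. lia. }
  (* the WZ relation turns the difference of the two tails into a telescoping series in G *)
  assert (HD := @is_series_minus _ C_NormedModule _ _ _ _ Hu H0).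
  apply (is_series_C_ext _ (fun k => wzG a n (S k + S n) - wzG a n (k + S n))%C) in HD.
  2:{ intros k. unfold u. apply wz_pair; [exact sqdiff_neq_0_small|lia]. }
  pose proof (is_series_telescope _ (wzG_tail_lim n)) as HT.
  pose proof (filterlim_locally_unique _ _ _ HD HT) as E.
  change (tail_sum (S n) + wzF a (S n) (S n) - tail_sum n = - wzG a n (S n))%C in E.
  rewrite (rhs_term_diag _ sqdiff_neq_0_small).
  replace (wzF a (S n) (S n)) with (- wzG a n (S n) - tail_sum (S n) + tail_sum n)%C
    by (rewrite <- E; ring).
  ring.
Qed.

Lemma rhs_series : is_series (fun n => rhs_term a (S n)) (tail_sum 0).
Proof.
  pose proof r_bounds as Hr.
  assert (Hlim : filterlim tail_sum eventually (locally (0 : C))).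
  { apply (filterlim_C_of_Cmod_le _ _ (fun n => 2 / (1 - r) ^ 2 * (3 / 4) ^ n)).
    - intros n. replace (tail_sum n - 0)%C with (tail_sum n) by ring.
      rewrite Rmult_comm. apply tail_sum_spec.
    - apply is_lim_seq_scal_0, is_lim_seq_geom. rewrite Rabs_pos_eq; lra. }
  replace (tail_sum 0) with (-1 * - tail_sum 0)%C by ring.
  apply (is_series_C_ext (fun n => -1 * (tail_sum (S n) - tail_sum n))%C).
  { intros n. rewrite rhs_term_eq_tail_diff. ring. }
  exact (@is_series_scal _ C_NormedModule _ _ _ (is_series_telescope _ Hlim)).
Qed.

Lemma wzF0_expansion j :
  wzF a 0 (S j) = (/ natC (S j) ^ 3 * / (1 - a ^ 2 / natC (S j) ^ 2) ^ 2)%C.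
Proof.
  assert (Hy : natC (S j) <> 0%C) by (apply natC_neq_0; lia).
  pose proof (sqdiff_neq_0_small (S j) ltac:(lia)) as Hd. unfold sqdiff in Hd.
  assert (Hd' : (1 - a ^ 2 / natC (S j) ^ 2)%C <> 0%C).
  { intros E. apply Hd. replace (a ^ 2)%C with (natC (S j) ^ 2 * (a ^ 2 / natC (S j) ^ 2))%C
      by (field; exact Hy).
    replace (a ^ 2 / natC (S j) ^ 2)%C with (1 - (1 - a ^ 2 / natC (S j) ^ 2))%C by ring.
    rewrite E. ring. }
  rewrite (wzF_0 _ sqdiff_neq_0_small) by lia. unfold sqdiff. field. tauto.
Qed.

Lemma Cmod_lhs_error_le K j :
  Cmod (/ natC (S j) ^ 3 * sum_n (fun k => natC (S k) * (a ^ 2 / natC (S j) ^ 2) ^ k) K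
        - wzF a 0 (j + 1))%C
  <= 2 * ((2 * INR K + 3) * r ^ K / (1 - r) ^ 2) * inv_pair j.
Proof.
  pose proof r_bounds. set (X := (a ^ 2 / natC (S j) ^ 2)%C).
  assert (Hy : natC (S j) <> 0%C) by (apply natC_neq_0; lia).
  assert (HX : Cmod X <= r).
  { unfold X. rewrite Cmod_div, !Cmod_pow, Cmod_natC by (apply Cpow_nz, Hy).
    pose proof (INR_pow_ge_1 (S j) 2 ltac:(lia)).
    apply Rle_div_l; [lra|]. pose proof (pow_le (Cmod a) 2 (Cmod_ge_0 a)). nra. }
  rewrite Nat.add_1_r, wzF0_expansion. fold X.
  replace (/ natC (S j) ^ 3 * sum_n (fun k => natC (S k) * X ^ k) K
           - / natC (S j) ^ 3 * / (1 - X) ^ 2)%C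
    with (- (/ natC (S j) ^ 3 * (/ (1 - X) ^ 2 - sum_n (fun k => natC (S k) * X ^ k) K)))%C
    by ring.
  rewrite Cmod_opp, Cmod_mult, Cmod_inv, Cmod_pow, Cmod_natC by (apply Cpow_nz, Hy).
  replace (2 * ((2 * INR K + 3) * r ^ K / (1 - r) ^ 2) * inv_pair j)
    with (2 * inv_pair j * ((2 * INR K + 3) * r ^ K / (1 - r) ^ 2)) by ring.
  apply Rmult_le_compat; [apply Rlt_le, Rinv_0_lt_compat, pow_lt, lt_0_INR; lia|apply Cmod_ge_0| |].
  - apply inv_pow_le_inv_pair. lia.
  - apply Cmod_arith_geom_remainder_le. lra.
Qed.

Lemma lhs_series : is_series (fun k => lhs_term a (S k)) (tail_sum 0).
Proof.
  pose proof r_bounds as Hr. destruct (tail_sum_spec 0) as [H0 _].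
  set (e := fun K => (2 * INR K + 3) * r ^ K / (1 - r) ^ 2).
  apply (filterlim_C_of_Cmod_le _ _ (fun K => 2 * e K)).
  - intros K.
    pose proof (is_series_sum_n _ _ K (lhs_term_expansion a)) as HK.
    apply (is_series_C_ext _ (fun j => / natC (S j) ^ 3
             * sum_n (fun k => natC (S k) * (a ^ 2 / natC (S j) ^ 2) ^ k) K)%C) in HK.
    2:{ intros j. apply (sum_n_mult_l (K := C_Ring)). }
    pose proof (@is_series_minus _ C_NormedModule _ _ _ _ HK H0) as HD.
    rewrite <- (Rmult_1_r (2 * e K)).
    exact (Cmod_series_le _ _ _ _ (Cmod_lhs_error_le K) HD
             (is_series_scal_l _ _ _ is_series_inv_pair)).
  - apply (is_lim_seq_ext (fun K => 2 / (1 - r) ^ 2 * (2 * (INR K * r ^ K) + 3 * r ^ K))).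
    { intros K. unfold e. field. lra. }
    apply is_lim_seq_scal_0. replace (Finite 0) with (Finite (0 + 0)) by (f_equal; ring).
    apply is_lim_seq_plus'; apply is_lim_seq_scal_0.
    + now apply is_lim_seq_INR_mult_pow.
    + apply is_lim_seq_geom. rewrite Rabs_pos_eq; lra.
Qed.

End SmallParameter.

Theorem corollary6 (a : C) (ha : Cmod a < 1) :
  exists L : C,
    is_series (fun k : nat => lhs_term a (S k)) L /\
    is_series (fun n : nat => rhs_term a (S n)) L.
Proof. exists (tail_sum a ha 0). split; [apply lhs_series|apply rhs_series]. Qed.
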